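(* For $\tau,t\in\mathbb{R}$ let $$\mu_0(\tau,t)=\int_{-\infty}^{\infty}\exp(-x^6+\tau x^4+tx^2)\,dx.$$ Then $$\mu_0(\tau,t)=\int_0^\infty s^{-1/2}\exp(-s^3+\tau s^2+ts)\,ds,$$ and $\varphi=\mu_0(\tau,t)$ satisfies $$\frac{\partial^3\varphi}{\partial t^3}-\tfrac23\tau\frac{\partial^2\varphi}{\partial t^2}-\tfrac13t\frac{\partial\varphi}{\partial t}-\tfrac16\varphi=0.$$ *)

From Stdlib Require Import Reals.
From Coquelicot Require Import Coquelicot.
Open Scope R_scope.

Definition mu0_integrand (tau t : R) (x : R) : R :=
  exp (- x ^ 6 + tau * x ^ 4 + t * x ^ 2).

Definition mu0 (tau t : R) : R :=
  RInt_gen (mu0_integrand tau t) (Rbar_locally m_infty) (Rbar_locally p_infty).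

Definition mu0_integrand' (tau t : R) (s : R) : R :=
  Rpower s (- (1 / 2)) * exp (- s ^ 3 + tau * s ^ 2 + t * s).

(* The k-th t-derivative of mu0 is the moment m_k(t) = int x^(2k) exp(-x^6 + tau x^4 + t x^2) dx.
   These improper integrals exist because the integrands are nonnegative and O(1/(1+x^2)).
   Differentiation under the integral sign follows from |e^y - 1 - y| <= y^2 e^|y|, which bounds
   m_k(t+h) - m_k(t) - h m_(k+1)(t) by h^2 m_(k+2)(t+1).  The differential equation reads
   m_0 - 6 m_3 + 4 tau m_2 + 2 t m_1 = 0, and the integrand of the left-hand side is the
   derivative of x exp(-x^6 + tau x^4 + t x^2), which vanishes at both infinities.  The integral
   over (0, oo) is the substitution x = sqrt s: the derivative of s |-> int_(-sqrt s)^(sqrt s) f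
   is (f (sqrt s) + f (- sqrt s)) / (2 sqrt s). *)

From Stdlib Require Import Reals Lra Lia Psatz Classical_Prop.
From Coquelicot Require Import Coquelicot.
From Corelib Require Import ssreflect.
Open Scope R_scope.
Set Bullet Behavior "Strict Subproofs".

Lemma exp_le_exp x y : x <= y -> exp x <= exp y.
Proof. by case/Rle_lt_or_eq => [/exp_increasing|->]; lra. Qed.

Lemma pow_le_exp u n : 0 <= u -> u ^ n <= INR n ^ n * exp u.
Proof.
move=> hu; case: n => [|n].
  by have := exp_ineq1_le u; rewrite /=; lra.
set m := INR (S n).
have hm : 0 < m by apply: lt_0_INR; lia.
have hum : 0 <= u / m by apply: Rdiv_le_0_compat; lra.
have exp_pow : exp (u / m) ^ S n = exp u.
  rewrite -Rpower_pow; last exact: exp_pos.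
  by rewrite /Rpower ln_exp -/m; f_equal; field; lra.
have : (u / m) ^ S n <= exp u.
  by rewrite -exp_pow; apply: pow_incr; split => //; have := exp_ineq1_le (u / m); lra.
have hmn : 0 < m ^ S n by apply: pow_lt.
rewrite /Rdiv Rpow_mult_distr pow_inv => h.
apply: (Rmult_le_reg_r (/ m ^ S n)); first exact: Rinv_0_lt_compat.
by rewrite (Rmult_comm (m ^ S n)) Rmult_assoc Rinv_r; lra.
Qed.

Lemma cubic_bounded_above a b :
  exists M, forall u, 0 <= u -> - u ^ 3 + a * u ^ 2 + b * u <= M.
Proof.
set A := Rabs a + Rabs b.
exists (2 * (A + 1) ^ 3) => u hu.
have hA : 0 <= A by rewrite /A; have := Rabs_pos a; have := Rabs_pos b; lra.
have ha : a * u ^ 2 <= A * u ^ 2.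
  by apply: Rmult_le_compat_r; [nra | rewrite /A; have := Rle_abs a; have := Rabs_pos b; lra].
have hb : b * u <= A * u.
  by apply: Rmult_le_compat_r => //; rewrite /A; have := Rle_abs b; have := Rabs_pos a; lra.
suff : - u ^ 3 + A * u ^ 2 + A * u <= 2 * (A + 1) ^ 3 by lra.
case: (Rle_or_lt u (A + 1)) => hu1.
- have : u ^ 2 <= (A + 1) ^ 2 by nra.
  have : 0 <= u ^ 3 by apply: pow_le.
  nra.
- have : u * (- u ^ 2 + A * u + A) <= 0 by nra.
  have : 0 <= (A + 1) ^ 3 by apply: pow_le; lra.
  nra.
Qed.

Lemma exp_taylor1_le y : Rabs (exp y - 1 - y) <= y ^ 2 * exp (Rabs y).
Proof.
have e1 := exp_ineq1_le y; have e2 := exp_ineq1_le (- y).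
have exp_inv : exp y * exp (- y) = 1 by rewrite -exp_plus Rplus_opp_r exp_0.
have p1 := exp_pos y; have p2 := exp_pos (- y).
rewrite Rabs_right; last lra.
case: (Rle_or_lt 0 y) => hy.
- rewrite Rabs_right; last lra.
  have : exp y - 1 <= y * exp y by nra.
  nra.
- rewrite Rabs_left //; nra.
Qed.

Lemma is_derive_of_quadratic_remainder (f : R -> R) t l M :
  (forall h, Rabs h <= 1 -> Rabs (f (t + h) - f t - h * l) <= h ^ 2 * M) ->
  is_derive f t l.
Proof.
move=> Hf; apply/is_derive_Reals => eps heps.
have M_ge0 : 0 <= M.
  have := Hf 1 (Req_le _ _ Rabs_R1).
  by have := Rabs_pos (f (t + 1) - f t - 1 * l); lra.
have hdelta : 0 < Rmin 1 (eps / (M + 1)) by apply: Rmin_pos; [lra | apply: Rdiv_lt_0_compat; lra].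
exists (mkposreal _ hdelta) => h h_neq0 /= h_small.
have h_le1 : Rabs h <= 1 by have := Rmin_l 1 (eps / (M + 1)); lra.
have h_lt : Rabs h * (M + 1) < eps.
  have := Rmin_r 1 (eps / (M + 1)) => hr.
  by apply: (Rlt_le_trans _ (eps / (M + 1) * (M + 1))); [nra | right; field; lra].
have h_abs : 0 < Rabs h by apply: Rabs_pos_lt.
have -> : (f (t + h) - f t) / h - l = (f (t + h) - f t - h * l) / h by field.
rewrite Rabs_div //.
apply: (Rmult_lt_reg_r (Rabs h)) => //.
rewrite /Rdiv Rmult_assoc Rinv_l; last lra.
have := Hf h h_le1; rewrite -(pow2_abs h); nra.
Qed.

Lemma filterlim_0_of_mul_bounded {F : (R -> Prop) -> Prop} {FF : Filter F} (f : R -> R) C :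
  (forall M, F (fun x => M < Rabs x)) -> (forall x, Rabs (x * f x) <= C) ->
  filterlim f F (locally 0).
Proof.
move=> Hlarge Hf; apply/filterlim_locally => eps.
have heps := cond_pos eps.
have C_ge0 : 0 <= C by have := Hf 0; rewrite Rmult_0_l Rabs_R0.
apply: filter_imp (Hlarge (C / eps)) => x hx.
rewrite /ball /= /AbsRing_ball /abs /minus /plus /opp /= Ropp_0 Rplus_0_r.
have x_large : C < Rabs x * eps.
  by apply: (Rle_lt_trans _ (C / eps * eps)); [right; field; lra | nra].
have x_pos : 0 < Rabs x by have := Rdiv_le_0_compat C eps C_ge0 heps; lra.
apply: (Rmult_lt_reg_l (Rabs x)) => //.
by have := Hf x; rewrite Rabs_mult; lra.
Qed.

Section NonnegImproperIntegral.

Variable f : R -> R.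
Hypothesis f_cont : forall x, continuous f x.
Hypothesis f_ge0 : forall x, 0 <= f x.

Let f_int a b : ex_RInt f a b.
Proof. by apply: ex_RInt_continuous => *; apply: f_cont. Qed.

Lemma RInt_le_RInt_superinterval a b c d :
  a <= c -> c <= d -> d <= b -> RInt f c d <= RInt f a b.
Proof.
move=> hac hcd hdb.
rewrite -(RInt_Chasles f a c b) // -(RInt_Chasles f c d b) // /plus /=.
have : 0 <= RInt f a c by apply: RInt_ge_0 => // *; apply: f_ge0.
have : 0 <= RInt f d b by apply: RInt_ge_0 => // *; apply: f_ge0.
lra.
Qed.

(* The improper integral is the supremum of the integrals over compact intervals. *)
Lemma ex_RInt_gen_nonneg_bounded K :
  (forall a b, a <= b -> RInt f a b <= K) ->
  ex_RInt_gen f (Rbar_locally m_infty) (Rbar_locally p_infty).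
Proof.
move=> HK.
pose E y := exists a b, a <= b /\ y = RInt f a b.
have E_bound : bound E by exists K => _ [a [b [hab ->]]]; apply: HK.
have E_inhabited : exists y, E y by exists (RInt f 0 0), 0, 0; split => //; lra.
have [l [l_ub l_lub]] := completeness E E_bound E_inhabited.
exists l => P [eps HP].
have [a0 [b0 [hab0 Hlt]]] : exists a0 b0, a0 <= b0 /\ l - eps < RInt f a0 b0.
  apply: NNPP => hno.
  suff : l <= l - eps by have := cond_pos eps; lra.
  apply: l_lub => _ [a [b [hab ->]]].
  by apply: Rnot_lt_le => hlt; apply: hno; exists a, b.
apply: (Filter_prod _ _ _ (fun a => a < a0) (fun b => b0 < b)); [by exists a0 | by exists b0 |].
move=> a b ha hb; exists (RInt f a b); split; first exact: RInt_correct.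
apply: HP; rewrite /ball /= /AbsRing_ball /abs /minus /plus /opp /=.
have : RInt f a b <= l by apply: l_ub; exists a, b; split => //; lra.
have : RInt f a0 b0 <= RInt f a b by apply: RInt_le_RInt_superinterval; lra.
split_Rabs; lra.
Qed.

Lemma ex_RInt_gen_le_inv_1_plus_sq C :
  (forall x, f x * (1 + x ^ 2) <= C) ->
  ex_RInt_gen f (Rbar_locally m_infty) (Rbar_locally p_infty).
Proof.
move=> HC.
have C_ge0 : 0 <= C by have := HC 0; have := f_ge0 0; nra.
apply: (ex_RInt_gen_nonneg_bounded (C * PI)) => a b hab.
have cauchy_cont x : continuous (fun y => C * / (1 + y ^ 2)) x.
  by apply: ex_derive_continuous; auto_derive; nra.
have cauchy_int :
    is_RInt (fun y => C * / (1 + y ^ 2)) a b (C * atan b - C * atan a).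
  apply: (is_RInt_derive (fun y => C * atan y)) => [x _|x _]; last exact: cauchy_cont.
  by apply: is_derive_scal; apply/is_derive_Reals; apply: derivable_pt_lim_atan.
apply: (Rle_trans _ (C * atan b - C * atan a)).
- rewrite -(is_RInt_unique _ _ _ _ cauchy_int).
  apply: RInt_le => //; first by apply: ex_RInt_continuous => *; apply: cauchy_cont.
  move=> x _; have hx : 0 < 1 + x ^ 2 by nra.
  apply: (Rmult_le_reg_r (1 + x ^ 2)) => //.
  by rewrite Rmult_assoc Rinv_l; [have := HC x; lra | lra].
- have := atan_bound a; have := atan_bound b; nra.
Qed.

End NonnegImproperIntegral.

Lemma filterlim_RInt_of_is_RInt_gen {Fa Fb : (R -> Prop) -> Prop}
    {FFa : Filter Fa} {FFb : Filter Fb} (f : R -> R) l :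
  is_RInt_gen f Fa Fb l ->
  filterlim (fun ab => RInt f (fst ab) (snd ab)) (filter_prod Fa Fb) (locally l).
Proof.
move=> Hf P HP; have := Hf P HP; rewrite /filtermapi /filtermap.
apply: filter_imp => -[a b] [y [hy Py]].
by rewrite /= (is_RInt_unique _ _ _ _ hy).
Qed.

Lemma at_right_0_p_infty_positive :
  filter_prod (at_right 0) (Rbar_locally p_infty)
    (fun ab => forall x, Rmin (fst ab) (snd ab) <= x -> 0 < x).
Proof.
apply: (Filter_prod _ _ _ (fun a => 0 < a) (fun b => 0 < b)).
- by exists (mkposreal 1 Rlt_0_1).
- by exists 0.
- by move=> a b ha hb x /= hx; have := Rmin_glb_lt _ _ _ ha hb; lra.
Qed.

Section SqrtSubstitution.

Variable f : R -> R.
Hypothesis f_cont : forall x, continuous f x.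

Let f_int a b : ex_RInt f a b.
Proof. by apply: ex_RInt_continuous => *; apply: f_cont. Qed.

Let sym_integral s := RInt f (- sqrt s) (sqrt s).

Let sqrt_subst_integrand s := (f (sqrt s) + f (- sqrt s)) / (2 * sqrt s).

Lemma is_derive_sym_integral s : 0 < s -> is_derive sym_integral s (sqrt_subst_integrand s).
Proof.
move=> hs.
have hsqrt : 0 < sqrt s by apply: sqrt_lt_R0.
have Dsqrt : is_derive sqrt s (/ (2 * sqrt s)).
  have := is_derive_sqrt id s 1 (is_derive_id s) hs.
  by rewrite /Rdiv Rmult_1_l.
have -> : sqrt_subst_integrand s
    = minus (scal (/ (2 * sqrt s)) (f (sqrt s))) (scal (- / (2 * sqrt s)) (f (- sqrt s))).
  by rewrite /sqrt_subst_integrand /minus /plus /opp /scal /= /mult /=; field; lra.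
apply: (is_derive_RInt_bound_comp f (RInt f)) => //.
- by apply: filter_forall => -[a b]; apply: RInt_correct.
- exact: is_derive_opp.
Qed.

Lemma continuous_sqrt_subst_integrand s : 0 < s -> continuous sqrt_subst_integrand s.
Proof.
move=> hs.
have hsqrt : 0 < sqrt s by apply: sqrt_lt_R0.
apply: (continuous_mult (fun s => f (sqrt s) + f (- sqrt s)) (fun s => / (2 * sqrt s))).
- apply: (continuous_plus (fun s => f (sqrt s)) (fun s => f (- sqrt s))).
  + by apply: continuous_comp; [apply: continuous_sqrt | apply: f_cont].
  + apply: (continuous_comp (fun s => - sqrt s)); last exact: f_cont.
    by apply: continuous_opp; apply: continuous_sqrt.
- apply: continuous_Rinv_comp; last lra.
  by apply: (continuous_mult (fun _ => 2)); [apply: continuous_const | apply: continuous_sqrt].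
Qed.

Lemma filterlim_sym_integral_0 : filterlim sym_integral (at_right 0) (locally 0).
Proof.
pose g u := RInt f (- u) u.
have g_cont : continuous g 0.
{ apply: ex_derive_continuous; eexists.
  apply: (is_derive_RInt_bound_comp f (RInt f) Ropp id).
  - by apply: filter_forall => -[a b]; apply: RInt_correct.
  - exact: f_cont.
  - exact: f_cont.
  - by apply: is_derive_opp; apply: is_derive_id.
  - exact: is_derive_id. }
have g0 : g 0 = 0 by rewrite /g Ropp_0 RInt_point.
rewrite /continuous g0 in g_cont.
apply: (filterlim_comp _ _ _ sqrt g _ (locally 0)); last exact: g_cont.
apply: (filterlim_filter_le_1 (F := locally 0)); first exact: filter_le_within.
by rewrite -{2}sqrt_0; apply: continuous_sqrt.
Qed.

Lemma filterlim_sym_integral_p_infty l :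
  is_RInt_gen f (Rbar_locally m_infty) (Rbar_locally p_infty) l ->
  filterlim sym_integral (Rbar_locally p_infty) (locally l).
Proof.
move=> Hf.
have sqrt_p : filterlim sqrt (Rbar_locally p_infty) (Rbar_locally p_infty).
  exact: (is_lim_sqrt_p _ _ (is_lim_id p_infty)).
apply: (filterlim_comp _ _ _ (fun s => (- sqrt s, sqrt s)) (fun ab => RInt f (fst ab) (snd ab))
          _ (filter_prod (Rbar_locally m_infty) (Rbar_locally p_infty))).
- apply: filterlim_pair => //.
  exact: (filterlim_comp _ _ _ _ _ _ _ _ sqrt_p (filterlim_Rbar_opp p_infty)).
- exact: filterlim_RInt_of_is_RInt_gen.
Qed.

Lemma is_RInt_gen_sqrt_subst l :
  is_RInt_gen f (Rbar_locally m_infty) (Rbar_locally p_infty) l ->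
  is_RInt_gen sqrt_subst_integrand (at_right 0) (Rbar_locally p_infty) l.
Proof.
move=> Hf.
have positive := at_right_0_p_infty_positive.
rewrite -[l]Rminus_0_r.
apply: (is_RInt_gen_ext (Derive sym_integral)).
  apply: filter_imp positive => ab pos x hx.
  by apply: is_derive_unique; apply: is_derive_sym_integral; apply: pos; lra.
apply: is_RInt_gen_Derive.
- apply: filter_imp positive => ab pos x hx.
  by eexists; apply: is_derive_sym_integral; apply: pos; lra.
- apply: filter_imp positive => ab pos x hx.
  have x_pos : 0 < x by apply: pos; lra.
  apply: (continuous_ext_loc _ sqrt_subst_integrand); last exact: continuous_sqrt_subst_integrand.
  apply: filter_imp (open_gt 0 x x_pos) => y y_pos.
  by apply: eq_sym; apply: is_derive_unique; apply: is_derive_sym_integral.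
- exact: filterlim_sym_integral_0.
- exact: filterlim_sym_integral_p_infty.
Qed.

End SqrtSubstitution.

(* x^(2k) mu0_integrand, defined by recursion so that [moment tau 0] is [mu0 tau]. *)
Fixpoint moment_integrand (tau : R) (k : nat) (t x : R) : R :=
  match k with
  | O => mu0_integrand tau t x
  | S k => x ^ 2 * moment_integrand tau k t x
  end.

Definition moment (tau : R) (k : nat) (t : R) : R :=
  RInt_gen (moment_integrand tau k t) (Rbar_locally m_infty) (Rbar_locally p_infty).

Lemma moment_integrandS tau k t x :
  moment_integrand tau (S k) t x = x ^ 2 * moment_integrand tau k t x.
Proof. by []. Qed.

Lemma moment_integrandE tau k t x :
  moment_integrand tau k t x = x ^ (2 * k) * mu0_integrand tau t x.
Proof.
elim: k => [|k IH]; first by rewrite /=; ring.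
by rewrite [LHS]/= IH Nat.mul_succ_r pow_add; ring.
Qed.

Lemma moment_integrand_ge0 tau k t x : 0 <= moment_integrand tau k t x.
Proof.
rewrite moment_integrandE pow_mult.
apply: Rmult_le_pos; first by apply: pow_le; nra.
exact: Rlt_le (exp_pos _).
Qed.

Lemma continuous_moment_integrand tau k t x : continuous (moment_integrand tau k t) x.
Proof.
apply: (continuous_ext (fun x => x ^ (2 * k) * mu0_integrand tau t x)).
  by move=> y; rewrite moment_integrandE.
by apply: ex_derive_continuous; rewrite /mu0_integrand; auto_derive.
Qed.

Lemma moment_integrand_shift tau k t h x :
  moment_integrand tau k (t + h) x = moment_integrand tau k t x * exp (h * x ^ 2).
Proof.
rewrite !moment_integrandE /mu0_integrand Rmult_assoc -exp_plus.
by do 2 f_equal; ring.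
Qed.

Lemma moment_integrand_bounded tau k t : exists C, forall x, moment_integrand tau k t x <= C.
Proof.
have [M HM] := cubic_bounded_above tau (t + 1).
exists (INR k ^ k * exp M) => x.
set u := x ^ 2.
have hu : 0 <= u by rewrite /u; nra.
have -> : moment_integrand tau k t x
          = (u ^ k * exp (- u)) * exp (- u ^ 3 + tau * u ^ 2 + (t + 1) * u).
  rewrite moment_integrandE pow_mult /mu0_integrand Rmult_assoc -exp_plus /u.
  by do 2 f_equal; ring.
have hpow : u ^ k * exp (- u) <= INR k ^ k.
  have -> : INR k ^ k = INR k ^ k * exp u * exp (- u).
    by rewrite Rmult_assoc -exp_plus Rplus_opp_r exp_0; ring.
  by apply: Rmult_le_compat_r; [apply: Rlt_le; apply: exp_pos | apply: pow_le_exp].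
apply: Rmult_le_compat => //.
- by apply: Rmult_le_pos; [apply: pow_le | apply: Rlt_le; apply: exp_pos].
- exact: Rlt_le (exp_pos _).
- exact: exp_le_exp (HM u hu).
Qed.

Lemma is_RInt_gen_moment tau k t :
  is_RInt_gen (moment_integrand tau k t) (Rbar_locally m_infty) (Rbar_locally p_infty)
    (moment tau k t).
Proof.
have [C0 H0] := moment_integrand_bounded tau k t.
have [C1 H1] := moment_integrand_bounded tau (S k) t.
have ex : ex_RInt_gen (moment_integrand tau k t) (Rbar_locally m_infty) (Rbar_locally p_infty).
  apply: (ex_RInt_gen_le_inv_1_plus_sq _ (continuous_moment_integrand tau k t)
            (moment_integrand_ge0 tau k t) (C0 + C1)) => x.
  by have := H0 x; have := H1 x; rewrite moment_integrandS; lra.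
exact: (RInt_gen_correct (Fa := Rbar_locally m_infty) (Fb := Rbar_locally p_infty) _ ex).
Qed.

Lemma moment_integrand_taylor1 tau k t h x : Rabs h <= 1 ->
  Rabs (moment_integrand tau k (t + h) x - moment_integrand tau k t x
        - h * moment_integrand tau (S k) t x)
  <= h ^ 2 * moment_integrand tau (S (S k)) (t + 1) x.
Proof.
move=> hh.
have hF := moment_integrand_ge0 tau k t x.
have hx : 0 <= x ^ 2 by nra.
have -> : moment_integrand tau k (t + h) x - moment_integrand tau k t x
          - h * moment_integrand tau (S k) t x
        = moment_integrand tau k t x * (exp (h * x ^ 2) - 1 - h * x ^ 2).
  by rewrite moment_integrand_shift moment_integrandS; ring.
have -> : h ^ 2 * moment_integrand tau (S (S k)) (t + 1) x
        = moment_integrand tau k t x * ((h * x ^ 2) ^ 2 * exp (x ^ 2)).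
  by rewrite !moment_integrandS moment_integrand_shift Rmult_1_l; ring.
rewrite Rabs_mult Rabs_right; last lra.
apply: Rmult_le_compat_l => //.
apply: Rle_trans (exp_taylor1_le _) _.
apply: Rmult_le_compat_l; first nra.
apply: exp_le_exp.
rewrite Rabs_mult (Rabs_right (x ^ 2)); nra.
Qed.

Lemma is_derive_moment tau k t : is_derive (moment tau k) t (moment tau (S k) t).
Proof.
apply: (is_derive_of_quadratic_remainder _ _ _ (moment tau (S (S k)) (t + 1))) => h hh.
have remainder : is_RInt_gen
    (fun x => moment_integrand tau k (t + h) x - moment_integrand tau k t x
              - h * moment_integrand tau (S k) t x)
    (Rbar_locally m_infty) (Rbar_locally p_infty)
    (moment tau k (t + h) - moment tau k t - h * moment tau (S k) t).
  by apply: is_RInt_gen_minus; [apply: is_RInt_gen_minus | apply: is_RInt_gen_scal];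
    apply: is_RInt_gen_moment.
have bound : is_RInt_gen (fun x => h ^ 2 * moment_integrand tau (S (S k)) (t + 1) x)
    (Rbar_locally m_infty) (Rbar_locally p_infty)
    (h ^ 2 * moment tau (S (S k)) (t + 1)).
  by apply: is_RInt_gen_scal; apply: is_RInt_gen_moment.
apply: (RInt_gen_norm _ _ _ _ _ _ remainder bound).
- apply: (Filter_prod _ _ _ (fun a => a < 0) (fun b => 0 < b)); [by exists 0 | by exists 0 |].
  by move=> a b /=; lra.
- by apply: filter_forall => ab x _; apply: moment_integrand_taylor1.
Qed.

Lemma Derive_n_moment tau n t : Derive_n (moment tau 0) n t = moment tau n t.
Proof.
elim: n t => [|n IH] t //=.
by rewrite (Derive_ext _ _ _ IH); apply: is_derive_unique; apply: is_derive_moment.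
Qed.

Lemma ex_derive_n_moment tau n t : ex_derive_n (moment tau 0) n t.
Proof.
case: n => [|n] //=.
apply: (ex_derive_ext (moment tau n)) => [s|]; first by rewrite Derive_n_moment.
by exists (moment tau (S n) t); apply: is_derive_moment.
Qed.

Lemma is_derive_boundary_term tau t x :
  is_derive (fun y => y * mu0_integrand tau t y) x
    (moment_integrand tau 0 t x - 6 * moment_integrand tau 3 t x
     + 4 * tau * moment_integrand tau 2 t x + 2 * t * moment_integrand tau 1 t x).
Proof. by rewrite !moment_integrandE /mu0_integrand; auto_derive => //=; ring. Qed.

Lemma is_RInt_gen_boundary_term_derivative tau t :
  is_RInt_gen (fun y => moment_integrand tau 0 t y - 6 * moment_integrand tau 3 t y
      + 4 * tau * moment_integrand tau 2 t y + 2 * t * moment_integrand tau 1 t y)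
    (Rbar_locally m_infty) (Rbar_locally p_infty) 0.
Proof.
pose phi y := y * mu0_integrand tau t y.
have Derive_phi y := is_derive_unique _ _ _ (is_derive_boundary_term tau t y).
have [C HC] := moment_integrand_bounded tau 1 t.
have phi_bounded y : Rabs (y * phi y) <= C.
  have -> : y * phi y = moment_integrand tau 1 t y by rewrite moment_integrandS /phi /=; ring.
  by rewrite Rabs_right; [apply: HC | apply/Rle_ge/moment_integrand_ge0].
suff : is_RInt_gen (Derive phi) (Rbar_locally m_infty) (Rbar_locally p_infty) (0 - 0).
  by rewrite Rminus_0_r; apply: is_RInt_gen_ext; apply: filter_forall => ab y _.
apply: is_RInt_gen_Derive.
- by apply: filter_forall => ab y _; eexists; apply: is_derive_boundary_term.
- apply: filter_forall => ab y _.
  apply: (continuous_ext (fun z => (1 - 6 * z ^ 6 + 4 * tau * z ^ 4 + 2 * t * z ^ 2)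
                                   * mu0_integrand tau t z)).
    by move=> z; rewrite Derive_phi !moment_integrandE /=; ring.
  by apply: ex_derive_continuous; rewrite /mu0_integrand; auto_derive.
- by apply: (filterlim_0_of_mul_bounded _ C) => // M; exists (- M) => y; split_Rabs; lra.
- by apply: (filterlim_0_of_mul_bounded _ C) => // M; exists M => y; split_Rabs; lra.
Qed.

Lemma moment_relation tau t :
  moment tau 0 t - 6 * moment tau 3 t + 4 * tau * moment tau 2 t + 2 * t * moment tau 1 t = 0.
Proof.
have moments : is_RInt_gen (fun y => moment_integrand tau 0 t y - 6 * moment_integrand tau 3 t y
      + 4 * tau * moment_integrand tau 2 t y + 2 * t * moment_integrand tau 1 t y)
    (Rbar_locally m_infty) (Rbar_locally p_infty)
    (moment tau 0 t - 6 * moment tau 3 t + 4 * tau * moment tau 2 t + 2 * t * moment tau 1 t).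
  apply: is_RInt_gen_plus; first apply: is_RInt_gen_plus; first apply: is_RInt_gen_minus.
  all: try (by apply: is_RInt_gen_scal; apply: is_RInt_gen_moment).
  exact: is_RInt_gen_moment.
rewrite -(is_RInt_gen_unique (Fa := Rbar_locally m_infty) (Fb := Rbar_locally p_infty) _ _ moments).
exact: (is_RInt_gen_unique (Fa := Rbar_locally m_infty) (Fb := Rbar_locally p_infty) _ _
  (is_RInt_gen_boundary_term_derivative tau t)).
Qed.

Lemma mu0_integrand_sqrt tau t s : 0 < s ->
  (mu0_integrand tau t (sqrt s) + mu0_integrand tau t (- sqrt s)) / (2 * sqrt s)
  = mu0_integrand' tau t s.
Proof.
move=> hs.
have hsqrt : 0 < sqrt s by apply: sqrt_lt_R0.
have sqrt_pow n : sqrt s ^ (2 * n) = s ^ n by rewrite pow_mult pow2_sqrt; lra.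
have even u : mu0_integrand tau t (- u) = mu0_integrand tau t u.
  by rewrite /mu0_integrand; do 2 f_equal; ring.
rewrite even /mu0_integrand /mu0_integrand'.
rewrite -[sqrt s ^ 6]/(sqrt s ^ (2 * 3)) -[sqrt s ^ 4]/(sqrt s ^ (2 * 2)).
rewrite -[sqrt s ^ 2]/(sqrt s ^ (2 * 1)) !sqrt_pow pow_1.
rewrite /Rdiv Rmult_1_l Rpower_Ropp Rpower_sqrt //.
field; lra.
Qed.

Theorem lemma5p1 (tau t : R) :
  ex_RInt_gen (mu0_integrand tau t) (Rbar_locally m_infty) (Rbar_locally p_infty) /\
  is_RInt_gen (mu0_integrand' tau t) (at_right 0) (Rbar_locally p_infty) (mu0 tau t) /\
  (forall k : nat, (k <= 3)%nat -> ex_derive_n (mu0 tau) k t) /\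
  Derive_n (mu0 tau) 3 t - 2 / 3 * tau * Derive_n (mu0 tau) 2 t
    - 1 / 3 * t * Derive_n (mu0 tau) 1 t - 1 / 6 * mu0 tau t = 0.
Proof.
have mu0_int : is_RInt_gen (mu0_integrand tau t) (Rbar_locally m_infty) (Rbar_locally p_infty)
    (mu0 tau t) := is_RInt_gen_moment tau 0 t.
split; [|split; [|split]].
- by exists (mu0 tau t).
- apply: is_RInt_gen_ext (is_RInt_gen_sqrt_subst _ (continuous_moment_integrand tau 0 t) _ mu0_int).
  apply: filter_imp at_right_0_p_infty_positive => ab pos x hx.
  by apply: mu0_integrand_sqrt; apply: pos; lra.
- by move=> k _; apply: ex_derive_n_moment.
- rewrite !Derive_n_moment -[mu0 tau t]/(moment tau 0 t).
  by have := moment_relation tau t; lra.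
Qed.
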